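(* Let $0<q<1/2$, $p=1-q$, and for integers $z\ge1$ let $$P(z)=1-\sum_{k=0}^{z-1}\left(p^zq^k-q^zp^k\right)\binom{k+z-1}{k},\qquad P_{SN}(z)=1-\sum_{k=0}^{z-1}e^{-zq/p}\frac{(zq/p)^k}{k!}\left(1-\left(\frac qp\right)^{z-k}\right).$$ Then as $z\to+\infty$, $P_{SN}(z)\prec P(z)$, i.e. $P_{SN}(z)/P(z)\to0$.
   Context: $P(z)$ is the exact probability of success of a double-spend attack after $z$ confirmations, $P_{SN}(z)$ is Nakamoto's approximation. *)

From Stdlib Require Import Reals Factorial.
From Coquelicot Require Import Coquelicot.
Open Scope R_scope.

(* Exact success probability of a double-spend attack after z confirmations:
   P(z) = 1 - sum_{k=0}^{z-1} (p^z q^k - q^z p^k) * C(k+z-1, k). *)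
Definition P_exact (q : R) (z : nat) : R :=
  let p := 1 - q in
  1 - sum_f_R0 (fun k => (p ^ z * q ^ k - q ^ z * p ^ k) * Binomial.C (k + z - 1) k)
                (z - 1).

Definition P_SN (q : R) (z : nat) : R :=
  let p := 1 - q in
  let lam := INR z * q / p in
  1 - sum_f_R0 (fun k => exp (- lam) * lam ^ k / INR (Factorial.fact k) * (1 - (q / p) ^ (z - k)))
                (z - 1).

From Stdlib Require Import Reals Lra Lia Factorial.
From Coquelicot Require Import Coquelicot.
Open Scope R_scope.

(** Write [p = 1 - q] and [rho = q / p].  Since the partial sums of the negative
    binomial distribution [p^z C(k+z-1, k) q^k] are at most 1, [P(z)] is at least
    its single term [q^z p^(z-1) C(2z-2, z-1) >= q^z p^(z-1) 4^(z-1) / (2z-1)].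
    On the other hand [P_SN(z)] is the average of [min 1 rho^(z-k)] against the
    Poisson weights of mean [rho z]; bounding the minimum by [rho^(z-k)] gives
    [P_SN(z) <= (rho e^(1-rho))^z].  Hence [P_SN(z) / P(z) = O(z c^z)] with
    [c = e^(1-rho) / (4 p^2)], and [c < 1] is the inequality [e^w < 1 / (1 - w)]
    at [w = (1 - 2q) / (2p)]. *)

Lemma C_nonneg (n k : nat) : 0 <= Binomial.C n k.
Proof.
  unfold Binomial.C. apply Rmult_le_pos; [apply pos_INR |].
  apply Rlt_le, Rinv_0_lt_compat, Rmult_lt_0_compat; apply INR_fact_lt_0.
Qed.

Lemma C_central_ge (n : nat) : 4 ^ n <= INR (2 * n + 1) * Binomial.C (2 * n) n.
Proof.
  replace (4 ^ n) with ((1 + 1) ^ (2 * n)) by (rewrite pow_mult; f_equal; ring).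
  rewrite binomial, Nat.add_1_r, Rmult_comm, <- sum_cte.
  apply sum_Rle; intros i Hi.
  rewrite !pow1, !Rmult_1_r. now apply C_maj.
Qed.

Definition negbin_sum (x : R) (m n : nat) : R :=
  sum_f_R0 (fun k => Binomial.C (k + m) k * x ^ k) n.

Lemma negbin_sum_succ (x : R) (m n : nat) :
  negbin_sum x (S m) (S n) = negbin_sum x m (S n) + x * negbin_sum x (S m) n.
Proof.
  unfold negbin_sum. rewrite !(decomp_sum _ (S n)) by lia.
  simpl Init.Nat.pred. rewrite !C_n_0, scal_sum, Rplus_assoc, <- plus_sum.
  f_equal. apply sum_eq; intros i _.
  replace (S i + S m)%nat with (S (i + S m)) by lia.
  replace (S i + m)%nat with (i + S m)%nat by lia.
  rewrite <- pascal by lia. simpl. ring.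
Qed.

Lemma negbin_sum_le_succ (x : R) (m n : nat) :
  0 <= x -> negbin_sum x m n <= negbin_sum x m (S n).
Proof.
  intros Hx. unfold negbin_sum. rewrite tech5.
  assert (0 <= Binomial.C (S n + m) (S n) * x ^ S n)
    by (apply Rmult_le_pos; [apply C_nonneg | now apply pow_le]).
  lra.
Qed.

(* [(1 - x)^(m+1) C(k+m, k) x^k] is the negative binomial distribution, whose
   partial sums are at most 1. *)
Lemma negbin_sum_mul_pow_le (x : R) (m n : nat) :
  0 <= x < 1 -> (1 - x) ^ S m * negbin_sum x m n <= 1.
Proof.
  intros Hx. revert n. induction m as [| m IHm]; intros n.
  - unfold negbin_sum. rewrite (sum_eq _ (fun k => x ^ k)).
    2:{ intros i _. rewrite Nat.add_0_r, C_n_n. ring. }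
    assert (Hgeom := GP_finite x n).
    assert (0 <= x ^ (n + 1)) by (apply pow_le; lra).
    simpl. rewrite Rmult_1_r. nra.
  - assert (Hrec := negbin_sum_succ x m n).
    assert (Hmono := negbin_sum_le_succ x (S m) n ltac:(lra)).
    assert (HS := IHm (S n)).
    assert (0 < (1 - x) ^ S m) by (apply pow_lt; lra).
    replace ((1 - x) ^ S (S m) * negbin_sum x (S m) n)
      with ((1 - x) ^ S m * ((1 - x) * negbin_sum x (S m) n)) by (simpl; ring).
    apply Rle_trans with ((1 - x) ^ S m * negbin_sum x m (S n)); [| exact HS].
    apply Rmult_le_compat_l; nra.
Qed.

Lemma negbin_sum_diag_ge (x : R) (n : nat) :
  0 <= x -> Binomial.C (2 * n) n * x ^ n <= negbin_sum x n n.
Proof.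
  intros Hx. unfold negbin_sum. destruct n as [| n]; [simpl; lra |].
  rewrite tech5. replace (S n + S n)%nat with (2 * S n)%nat by lia.
  assert (0 <= sum_f_R0 (fun k => Binomial.C (k + S n) k * x ^ k) n).
  { apply cond_pos_sum; intros k. apply Rmult_le_pos; [apply C_nonneg | now apply pow_le]. }
  lra.
Qed.

Lemma P_exact_succ (q : R) (n : nat) :
  P_exact q (S n) = 1 - (1 - q) ^ S n * negbin_sum q n n + q ^ S n * negbin_sum (1 - q) n n.
Proof.
  unfold P_exact, negbin_sum. replace (S n - 1)%nat with n by lia.
  rewrite (sum_eq _ (fun k => Binomial.C (k + n) k * q ^ k * (1 - q) ^ S n
                              - Binomial.C (k + n) k * (1 - q) ^ k * q ^ S n)).
  - rewrite minus_sum, <- !scal_sum. ring.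
  - intros i _. replace (i + S n - 1)%nat with (i + n)%nat by lia. ring.
Qed.

Lemma P_exact_succ_ge (q : R) (n : nat) : 0 < q < 1 ->
  q ^ S n * (1 - q) ^ n * Binomial.C (2 * n) n <= P_exact q (S n).
Proof.
  intros Hq. rewrite P_exact_succ.
  assert (Hneg := negbin_sum_mul_pow_le q n n ltac:(lra)).
  assert (Hdiag := negbin_sum_diag_ge (1 - q) n ltac:(lra)).
  assert (0 < q ^ S n) by (apply pow_lt; lra).
  assert (q ^ S n * (Binomial.C (2 * n) n * (1 - q) ^ n) <= q ^ S n * negbin_sum (1 - q) n n)
    by (apply Rmult_le_compat_l; lra).
  nra.
Qed.

Definition exp_partial (x : R) (n : nat) : R :=
  sum_f_R0 (fun k => x ^ k / INR (fact k)) n.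

Lemma exp_partial_nonneg (x : R) (n : nat) : 0 <= x -> 0 <= exp_partial x n.
Proof.
  intros Hx. apply cond_pos_sum; intros k.
  apply Rmult_le_pos; [now apply pow_le |].
  apply Rlt_le, Rinv_0_lt_compat, INR_fact_lt_0.
Qed.

Lemma is_lim_seq_exp_partial (x : R) : is_lim_seq (exp_partial x) (exp x).
Proof.
  apply is_lim_seq_ext with (sum_n (fun k => scal (pow_n x k) (/ INR (fact k)))).
  - intros n. rewrite sum_n_Reals. apply sum_eq; intros k _.
    rewrite pow_n_pow. reflexivity.
  - exact (is_exp_Reals x).
Qed.

Lemma pow_le_pow_of_le_1 (r : R) (m n : nat) : 0 <= r <= 1 -> (m <= n)%nat -> r ^ n <= r ^ m.
Proof.
  intros Hr Hmn. replace n with (m + (n - m))%nat by lia. rewrite pow_add.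
  assert (0 <= r ^ m) by (apply pow_le; lra).
  assert (r ^ (n - m) <= 1) by (rewrite <- (pow1 (n - m)); apply pow_incr; lra).
  nra.
Qed.

Lemma exp_partial_tail_scale_le (r x : R) (n k : nat) : 0 <= r <= 1 -> 0 <= x ->
  exp_partial (r * x) (n + k) - exp_partial (r * x) n
  <= r ^ S n * (exp_partial x (n + k) - exp_partial x n).
Proof.
  intros Hr Hx. induction k as [| k IHk].
  - rewrite Nat.add_0_r. lra.
  - rewrite Nat.add_succ_r. unfold exp_partial in *. rewrite !tech5.
    set (m := S (n + k)).
    assert (Hrm : r ^ m <= r ^ S n) by (apply pow_le_pow_of_le_1; [lra | unfold m; lia]).
    assert (0 <= x ^ m / INR (fact m)).
    { apply Rmult_le_pos; [now apply pow_le |].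
      apply Rlt_le, Rinv_0_lt_compat, INR_fact_lt_0. }
    assert ((r * x) ^ m / INR (fact m) <= r ^ S n * (x ^ m / INR (fact m))).
    { rewrite Rpow_mult_distr. unfold Rdiv. rewrite Rmult_assoc.
      now apply Rmult_le_compat_r. }
    nra.
Qed.

Lemma exp_tail_scale_le (r x : R) (n : nat) : 0 <= r <= 1 -> 0 <= x ->
  exp (r * x) - exp_partial (r * x) n <= r ^ S n * (exp x - exp_partial x n).
Proof.
  intros Hr Hx.
  assert (Hl : is_lim_seq (fun N => exp_partial (r * x) N - exp_partial (r * x) n)
                          (exp (r * x) - exp_partial (r * x) n)).
  { apply is_lim_seq_minus'; [apply is_lim_seq_exp_partial | apply is_lim_seq_const]. }
  assert (Hr' : is_lim_seq (fun N => r ^ S n * (exp_partial x N - exp_partial x n))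
                           (r ^ S n * (exp x - exp_partial x n))).
  { apply (is_lim_seq_scal_l _ _ (exp x - exp_partial x n)), is_lim_seq_minus';
      [apply is_lim_seq_exp_partial | apply is_lim_seq_const]. }
  refine (is_lim_seq_le_loc _ _ _ _ _ Hl Hr').
  exists n. intros N HN. replace N with (n + (N - n))%nat by lia.
  now apply exp_partial_tail_scale_le.
Qed.

Lemma P_SN_succ (q : R) (n : nat) : q < 1 ->
  P_SN q (S n) =
  1 - exp (- (q / (1 - q) * INR (S n))) * exp_partial (q / (1 - q) * INR (S n)) n
    + exp (- (q / (1 - q) * INR (S n))) * (q / (1 - q)) ^ S n * exp_partial (INR (S n)) n.
Proof.
  intros Hq. unfold P_SN, exp_partial.
  set (rho := q / (1 - q)). set (z := INR (S n)).
  replace (z * q / (1 - q)) with (rho * z) by (unfold rho; field; lra).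
  replace (S n - 1)%nat with n by lia.
  rewrite (sum_eq _ (fun k => (rho * z) ^ k / INR (fact k) * exp (- (rho * z))
                              - z ^ k / INR (fact k) * (exp (- (rho * z)) * rho ^ S n))).
  - rewrite minus_sum, <- !scal_sum. ring.
  - intros k Hk. rewrite Rpow_mult_distr.
    replace (rho ^ S n) with (rho ^ k * rho ^ (S n - k)) by (rewrite <- pow_add; f_equal; lia).
    field. apply INR_fact_neq_0.
Qed.

Lemma exp_INR_mul (n : nat) (x : R) : exp (INR n * x) = exp x ^ n.
Proof.
  rewrite <- Rpower_pow by apply exp_pos.
  unfold Rpower. rewrite ln_exp. reflexivity.
Qed.

Lemma one_sub_exp_neg_mul_partial (l : R) (n : nat) :
  1 - exp (- l) * exp_partial l n = exp (- l) * (exp l - exp_partial l n).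
Proof. rewrite Rmult_minus_distr_l, <- exp_plus, Rplus_opp_l, exp_0. reflexivity. Qed.

Lemma P_SN_succ_nonneg (q : R) (n : nat) : 0 < q < 1 -> 0 <= P_SN q (S n).
Proof.
  intros Hq. rewrite P_SN_succ, one_sub_exp_neg_mul_partial by lra.
  set (rho := q / (1 - q)). set (z := INR (S n)).
  assert (Hrho : 0 <= rho) by (unfold rho; apply Rlt_le, Rdiv_lt_0_compat; lra).
  assert (Hz : 0 <= z) by apply pos_INR.
  assert (Htaylor := exp_ge_taylor (rho * z) n ltac:(nra)).
  fold (exp_partial (rho * z) n) in Htaylor.
  assert (0 < exp (- (rho * z))) by apply exp_pos.
  assert (0 <= rho ^ S n) by now apply pow_le.
  assert (0 <= exp_partial z n) by now apply exp_partial_nonneg.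
  apply Rplus_le_le_0_compat.
  - apply Rmult_le_pos; lra.
  - apply Rmult_le_pos; [apply Rmult_le_pos |]; lra.
Qed.

(* Replacing [min 1 rho^(z-k)] by [rho^(z-k)] in the Poisson average. *)
Lemma P_SN_succ_le (q : R) (n : nat) : 0 < q <= 1 / 2 ->
  P_SN q (S n) <= (q / (1 - q) * exp (1 - q / (1 - q))) ^ S n.
Proof.
  intros Hq. rewrite P_SN_succ, one_sub_exp_neg_mul_partial by lra.
  set (rho := q / (1 - q)). set (z := INR (S n)).
  assert (Hrho : 0 <= rho <= 1).
  { unfold rho; split; [apply Rlt_le, Rdiv_lt_0_compat | apply Rcomplements.Rle_div_l]; lra. }
  assert (0 <= z) by apply pos_INR.
  assert (0 < exp (- (rho * z))) by apply exp_pos.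
  assert (Htail := exp_tail_scale_le rho z n Hrho ltac:(lra)).
  assert (Hexp : exp (- (rho * z)) * exp z = exp (1 - rho) ^ S n).
  { rewrite <- exp_plus, <- exp_INR_mul. f_equal. unfold z. ring. }
  rewrite Rpow_mult_distr, <- Hexp.
  assert (exp (- (rho * z)) * (exp (rho * z) - exp_partial (rho * z) n)
          <= exp (- (rho * z)) * (rho ^ S n * (exp z - exp_partial z n)))
    by (apply Rmult_le_compat_l; lra).
  nra.
Qed.

Lemma exp_lt_inv_one_sub (w : R) : 0 < w < 1 -> exp w < / (1 - w).
Proof.
  intros Hw. rewrite <- (Rinv_inv (exp w)), <- exp_Ropp.
  apply Rinv_lt_contravar.
  - apply Rmult_lt_0_compat; [lra | apply exp_pos].
  - assert (H := exp_ineq1 (- w) ltac:(lra)). lra.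
Qed.

(* With [w = (1 - 2q) / (2(1 - q))] one has [1 - q/(1 - q) = 2w] and [1 - w = 1 / (2(1 - q))]. *)
Lemma exp_one_sub_odds_lt (q : R) : 0 < q < 1 / 2 -> exp (1 - q / (1 - q)) < 4 * (1 - q) ^ 2.
Proof.
  intros Hq. set (w := (1 - 2 * q) / (2 * (1 - q))).
  replace (1 - q / (1 - q)) with (w + w) by (unfold w; field; lra).
  assert (Hw := exp_lt_inv_one_sub w ltac:(unfold w; split;
    [apply Rdiv_lt_0_compat | apply Rcomplements.Rlt_div_l]; lra)).
  replace (/ (1 - w)) with (2 * (1 - q)) in Hw by (unfold w; field; lra).
  assert (0 < exp w) by apply exp_pos.
  rewrite exp_plus. simpl. nra.
Qed.

Lemma is_lim_seq_succ_mul_geom (c : R) : 0 < c < 1 -> is_lim_seq (fun n => INR (S n) * c ^ n) 0.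
Proof.
  intros Hc.
  apply is_lim_seq_ext with (fun n => Rabs (INR (S n) * c ^ n)).
  { intros n. apply Rabs_pos_eq, Rmult_le_pos; [apply pos_INR | apply pow_le; lra]. }
  apply ex_series_lim_0, (ex_series_DAlembert _ c); [lra | |].
  - intros n. apply Rgt_not_eq, Rmult_lt_0_compat; [apply lt_0_INR; lia | apply pow_lt; lra].
  - apply is_lim_seq_ext with (fun n => c + c * / INR (S n)).
    + intros n. assert (0 < INR (S n)) by (apply lt_0_INR; lia).
      assert (0 < c ^ n) by (apply pow_lt; lra).
      rewrite Rabs_pos_eq.
      * rewrite (S_INR (S n)). simpl pow. field. lra.
      * apply Rlt_le, Rdiv_lt_0_compat; apply Rmult_lt_0_compat;
          (apply lt_0_INR; lia) || (apply pow_lt; lra).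
    + replace c with (c + c * 0) at 1 by ring.
      apply is_lim_seq_plus'; [apply is_lim_seq_const |].
      apply (is_lim_seq_scal_l _ c 0), is_lim_seq_incr_1 with (u := fun n => / INR n).
      replace (Finite 0) with (Rbar_inv p_infty) by reflexivity.
      apply is_lim_seq_inv; [apply is_lim_seq_INR | discriminate].
Qed.

Lemma P_SN_div_P_exact_succ_bounds (q : R) (n : nat) : 0 < q < 1 / 2 ->
  let E := exp (1 - q / (1 - q)) in
  0 <= P_SN q (S n) / P_exact q (S n)
  <= E / (1 - q) * (INR (2 * n + 1) * (E / (4 * (1 - q) ^ 2)) ^ n).
Proof.
  intros Hq E.
  set (L := q ^ S n * (1 - q) ^ n * (4 ^ n / INR (2 * n + 1))).
  assert (Hodd : 0 < INR (2 * n + 1)) by (apply lt_0_INR; lia).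
  assert (HL : 0 < L).
  { apply Rmult_lt_0_compat; [apply Rmult_lt_0_compat; apply pow_lt; lra |].
    apply Rdiv_lt_0_compat; [apply pow_lt |]; lra. }
  assert (HLP : L <= P_exact q (S n)).
  { apply Rle_trans with (q ^ S n * (1 - q) ^ n * Binomial.C (2 * n) n);
      [| apply P_exact_succ_ge; lra].
    apply Rmult_le_compat_l; [apply Rmult_le_pos; apply pow_le; lra |].
    apply Rcomplements.Rle_div_l; [lra |].
    rewrite Rmult_comm. apply C_central_ge. }
  assert (HS0 := P_SN_succ_nonneg q n ltac:(lra)).
  assert (HS := P_SN_succ_le q n ltac:(lra)). fold E in HS.
  split; [apply Rle_mult_inv_pos; lra |].
  apply Rle_trans with ((q / (1 - q) * E) ^ S n / L).
  - unfold Rdiv. apply Rmult_le_compat; try lra.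
    + apply Rlt_le, Rinv_0_lt_compat; lra.
    + apply Rinv_le_contravar; lra.
  - apply Req_le. unfold L.
    assert (0 < q ^ n) by (apply pow_lt; lra).
    assert (0 < (1 - q) ^ n) by (apply pow_lt; lra).
    assert (0 < 4 ^ n) by (apply pow_lt; lra).
    unfold Rdiv. rewrite !Rpow_mult_distr, !pow_inv, !Rpow_mult_distr, <- pow_mult.
    simpl pow. rewrite Nat.add_0_r, pow_add.
    field. repeat split; lra.
Qed.

Theorem mainTheorem10 (q : R) (hq0 : 0 < q) (hq1 : q < 1 / 2) :
  is_lim_seq (fun z : nat => P_SN q z / P_exact q z) 0.
Proof.
  set (E := exp (1 - q / (1 - q))).
  set (c := E / (4 * (1 - q) ^ 2)).
  assert (Hc : 0 < c < 1).
  { assert (HE := exp_one_sub_odds_lt q ltac:(lra)). fold E in HE.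
    assert (0 < E) by apply exp_pos.
    assert (0 < 4 * (1 - q) ^ 2) by (simpl; nra).
    unfold c. split; [now apply Rdiv_lt_0_compat | apply Rcomplements.Rlt_div_l; lra]. }
  assert (Hlim : is_lim_seq (fun n => E / (1 - q) * (INR (2 * n + 1) * c ^ n)) 0).
  { replace (Finite 0) with (Rbar_mult (E / (1 - q)) (2 * 0 - 0)) by (simpl; f_equal; ring).
    apply is_lim_seq_scal_l.
    apply is_lim_seq_ext with (fun n => 2 * (INR (S n) * c ^ n) - c ^ n).
    { intros n. rewrite plus_INR, mult_INR, S_INR. simpl. ring. }
    apply is_lim_seq_minus'.
    - apply (is_lim_seq_scal_l _ 2 0), is_lim_seq_succ_mul_geom, Hc.
    - apply is_lim_seq_geom. rewrite Rabs_pos_eq; lra. }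
  apply is_lim_seq_incr_1.
  refine (is_lim_seq_le_le (fun _ => 0) _ _ 0 _ (is_lim_seq_const 0) Hlim).
  intros n. now apply P_SN_div_P_exact_succ_bounds.
Qed.
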